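(* Let $f\colon\underline I=I_1\times\cdots\times I_n\to\mathbb R$ be a convex function ($I_i$ intervals) and let $H$ be a finite-dimensional Hilbert space. Let $\underline x=(x_1,\dots,x_n)$ and $\underline y=(y_1,\dots,y_n)$ be abelian $n$-tuples of self-adjoint operators on $H$ with $\sigma(x_i),\sigma(y_i)\subseteq I_i$, which are compatible, i.e. $[x_i,y_j]=[x_j,y_i]$ for all $i,j=1,\dots,n$. Then $$f(\lambda\underline x+(1-\lambda)\underline y)\prec_w\lambda f(\underline x)+(1-\lambda)f(\underline y)\qquad\text{for all }\lambda\in[0,1].$$
   Context: An $n$-tuple is abelian if its entries commute; $[a,b]=ab-ba$. $f$ of an abelian tuple of self-adjoint operators is defined by joint functional calculus; $\lambda\underline x+(1-\lambda)\underline y$ is taken entrywise. For a self-adjoint operator $x$ on an $m$-dimensional Hilbert space, $x_{[1]}\ge\cdots\ge x_{[m]}$ are its eigenvalues counted with multiplicity in decreasing order, and $x\prec_w y$ means $\sum_{i=1}^k x_{[i]}\le\sum_{i=1}^k y_{[i]}$ for $k=1,\dots,m$. *)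

From HB Require Import structures.
From mathcomp Require Import all_boot all_order all_algebra.
From mathcomp Require Import complex.
From mathcomp Require Import reals.
From Stdlib Require Import ClassicalEpsilon.

Set Implicit Arguments.
Unset Strict Implicit.
Unset Printing Implicit Defensive.

Import Order.TTheory GRing.Theory Num.Theory.
Local Open Scope ring_scope.
Local Open Scope sesquilinear_scope.

Section Defs.
Variable R : realType.
Local Notation C := R[i].

Definition toC (t : R) : C := Complex t 0.

(* self-adjoint operators on the m-dimensional Hilbert space C^m *)
Definition selfadj m (x : 'M[C]_m) : Prop := x \is hermsymmx.

Definition spec_in m (x : 'M[C]_m) (I : interval R) : Prop :=
  forall a : C, eigenvalue x a -> exists2 t : R, t \in I & a = toC t.

Definition abelian_tuple n m (xs : 'I_n -> 'M[C]_m) : Prop :=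
  forall i j, xs i *m xs j = xs j *m xs i.

Definition commut m (a b : 'M[C]_m) : 'M[C]_m := a *m b - b *m a.

Definition compatible n m (xs ys : 'I_n -> 'M[C]_m) : Prop :=
  forall i j, commut (xs i) (ys j) = commut (xs j) (ys i).

Definition jfc_rel n m (f : ('I_n -> R) -> R) (xs : 'I_n -> 'M[C]_m)
    (F : 'M[C]_m) : Prop :=
  exists (U : 'M[C]_m) (d : 'I_n -> 'rV[R]_m),
    [/\ U \is unitarymx,
        forall i, xs i = U ^t* *m diag_mx (map_mx toC (d i)) *m U
      & F = U ^t* *m diag_mx (\row_k toC (f (fun i => d i 0 k))) *m U].

(* joint functional calculus f(xs) (well defined for abelian tuples of
   self-adjoint operators, where it is unique) *)
Definition jfc n m (f : ('I_n -> R) -> R) (xs : 'I_n -> 'M[C]_m) : 'M[C]_m :=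
  epsilon (inhabits 0) (jfc_rel f xs).

(* the eigenvalues of x counted with (algebraic) multiplicity, as a list of
   reals: the roots of the characteristic polynomial *)
Definition eig_list m (x : 'M[C]_m) : seq R :=
  epsilon (inhabits [::])
    (fun s : seq R => char_poly x = \prod_(t <- s) ('X - (toC t)%:P)).

Definition eigs_dec m (x : 'M[C]_m) : seq R := sort (fun a b => b <= a) (eig_list x).

Definition weak_major m (x y : 'M[C]_m) : Prop :=
  forall k : nat, (1 <= k <= m)%N ->
    \sum_(i < k) nth 0 (eigs_dec x) i <= \sum_(i < k) nth 0 (eigs_dec y) i.

Definition convex_on_box n (I : 'I_n -> interval R) (f : ('I_n -> R) -> R) : Prop :=
  forall u v : 'I_n -> R, (forall i, u i \in I i) -> (forall i, v i \in I i) ->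
  forall l : R, 0 <= l <= 1 ->
    f (fun i => l * u i + (1 - l) * v i) <= l * f u + (1 - l) * f v.

End Defs.

(* Compatibility is exactly what makes z = l x + (1 - l) y abelian, so z, x and y each
   have a joint orthonormal eigenbasis.  Let w be a joint eigenvector of z; its joint
   eigenvalue is d = l <x w, w> + (1 - l) <y w, w>.  The numbers <x_i w, w> are one
   convex combination (with weights |<w, u_p>|^2) of the joint eigenvalues of x, so
   Jensen gives f(<x w, w>) <= <f(x) w, w>, likewise for y, and convexity of f yields
   f(d) <= <M w, w> for M = l f(x) + (1 - l) f(y).  Hence the eigenvalues of f(z) are
   dominated by the diagonal of M in the eigenbasis of z.  That diagonal is a doubly
   stochastic average of the eigenvalues of M, so any k of its entries sum to at most
   the k largest eigenvalues of M (Ky Fan). *)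

From HB Require Import structures.
From mathcomp Require Import all_boot all_order all_algebra perm.
From mathcomp Require Import complex reals ring lra.
From Stdlib Require Import ClassicalEpsilon FunctionalExtensionality.
Import Order.TTheory GRing.Theory Num.Theory.
Local Open Scope ring_scope.
Set Implicit Arguments. Unset Strict Implicit. Unset Printing Implicit Defensive.

Section IntervalConvexity.
Variable R : realFieldType.

Lemma mem_itv_between (I : interval R) (a b c : R) :
  a \in I -> b \in I -> a <= c <= b -> c \in I.
Proof.
case: I => bl br; rewrite !itv_boundlr => /andP[la _] /andP[_ rb] /andP[ac cb].
by rewrite (le_trans la) ?(le_trans _ rb) ?bnd_simp.
Qed.

Lemma mem_itv_conv (I : interval R) (a b l : R) :
  a \in I -> b \in I -> 0 <= l <= 1 -> l * a + (1 - l) * b \in I.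
Proof.
move=> aI bI /andP[l0 l1].
have [ab|ba] := leP a b; first by apply: (mem_itv_between aI bI); apply/andP; split; nra.
by apply: (mem_itv_between bI aI); apply/andP; split; nra.
Qed.

End IntervalConvexity.

Section Jensen.
Variable R : realType.
Variables (n : nat) (I : 'I_n -> interval R) (f : ('I_n -> R) -> R).
Hypothesis convex_f : convex_on_box I f.

Lemma convex_on_box_jensen (T : eqType) (r : seq T) (p : T -> R)
    (a : T -> 'I_n -> R) :
  (forall t, 0 <= p t) -> (forall t i, a t i \in I i) -> \sum_(t <- r) p t = 1 ->
  (forall i, \sum_(t <- r) p t * a t i \in I i) /\
  f (fun i => \sum_(t <- r) p t * a t i) <= \sum_(t <- r) p t * f (a t).
Proof.
elim: r p => [|t r IHr] p p_ge0 aI; first by rewrite big_nil => /esym/eqP; rewrite oner_eq0.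
rewrite big_cons; set S := \sum_(u <- r) p u => pS1.
have S_ge0 : 0 <= S by apply: sumr_ge0.
have [S0|S_neq0] := eqVneq S 0.
  have tail0 (G : T -> R) : \sum_(u <- r) p u * G u = 0.
    move/eqP: S0; rewrite psumr_eq0 // => /allP pr0.
    by rewrite big_seq big1 // => u /pr0 /eqP ->; rewrite mul0r.
  have pt1 : p t = 1 by rewrite -pS1 S0 addr0.
  have comb_t : (fun i => \sum_(u <- t :: r) p u * a u i) = a t.
    by apply: functional_extensionality => i; rewrite big_cons tail0 pt1 mul1r addr0.
  split=> [i|]; first by rewrite big_cons tail0 pt1 mul1r addr0.
  by rewrite comb_t big_cons tail0 pt1 mul1r addr0.
pose q u := p u / S.
have [qI f_q] : (forall i, \sum_(u <- r) q u * a u i \in I i) /\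
    f (fun i => \sum_(u <- r) q u * a u i) <= \sum_(u <- r) q u * f (a u).
  apply: IHr => // [u|]; first by rewrite divr_ge0.
  by rewrite -mulr_suml mulfV.
have rescale (G : T -> R) : \sum_(u <- r) p u * G u = S * \sum_(u <- r) q u * G u.
  by rewrite mulr_sumr; apply: eq_bigr => u _; rewrite mulrA mulrCA mulfV ?mulr1.
have S1 : 1 - p t = S by rewrite -pS1 addrAC subrr add0r.
have pt01 : 0 <= p t <= 1 by rewrite p_ge0 -subr_ge0 S1.
have comb_t : (fun i => \sum_(u <- t :: r) p u * a u i) =
    (fun i => p t * a t i + (1 - p t) * \sum_(u <- r) q u * a u i).
  by apply: functional_extensionality => i; rewrite big_cons rescale S1.
split=> [i|]; first by rewrite big_cons rescale -S1; exact: mem_itv_conv.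
rewrite comb_t; apply: le_trans (convex_f (aI t) qI pt01) _.
by rewrite S1 big_cons rescale lerD2l ler_wpM2l.
Qed.

End Jensen.

Section KyFan.
Variable R : realDomainType.
Local Notation geR := (fun a b : R => b <= a).

Lemma sort_ge_perm m (g : 'I_m -> R) : exists s : 'S_m,
  (forall i : 'I_m, nth 0 (sort geR [seq g j | j <- enum 'I_m]) i = g (s i)) /\
  (forall i j : 'I_m, (i <= j)%N -> g (s j) <= g (s i)).
Proof.
have : perm_eq (sort geR [seq g j | j <- enum 'I_m]) (map_tuple g (ord_tuple m)).
  by rewrite perm_sort.
move=> /tuple_permP[s sort_gE]; exists s.
have nth_sort (i : 'I_m) : nth 0 (sort geR [seq g j | j <- enum 'I_m]) i = g (s i).
  by rewrite sort_gE (nth_map i) ?size_enum_ord // nth_ord_enum tnth_map tnth_ord_tuple.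
split=> // i j le_ij; rewrite -!nth_sort.
apply: (sorted_leq_nth ge_trans (@lexx _ R) 0 (sort_sorted ge_total _)) le_ij;
  by rewrite inE size_sort size_map size_enum_ord.
Qed.

Lemma nonincr_weighted_sum_le m k (s c : 'I_m -> R) : (0 < k <= m)%N ->
  (forall i j : 'I_m, (i <= j)%N -> s j <= s i) ->
  (forall i, 0 <= c i <= 1) -> \sum_i c i = k%:R ->
  \sum_i c i * s i <= \sum_(i < m | (i < k)%N) s i.
Proof.
move=> /andP[k_gt0 km] s_dec c01 sum_c.
have k1m : (k.-1 < m)%N by rewrite prednK.
pose tau := s (Ordinal k1m).
(* [tau], the k-th largest value, separates the first k terms from the others. *)
have termwise i : c i * s i <= (if (i < k)%N then s i else 0) + tau * (c i - (i < k)%:R).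
  have /andP[c0 c1] := c01 i.
  have [ik|ki] := ltnP i k.
    have tau_le : tau <= s i by apply: s_dec; rewrite /= -ltnS prednK.
    rewrite /=; nra.
  have le_tau : s i <= tau by apply: s_dec; rewrite /= (leq_trans (leq_pred k)).
  rewrite /=; nra.
apply: le_trans (ler_sum _ (fun i _ => termwise i)) _.
rewrite big_split /= -big_mkcond -mulr_sumr sumrB sum_c.
have -> : \sum_(i < m) (i < k)%:R = k%:R :> R.
  rewrite (eq_bigr (fun i : 'I_m => if (i < k)%N then 1 else 0)) => [|i _]; last by case: ltnP.
  by rewrite -big_mkcond -(big_ord_widen m (fun _ => 1) km) sumr_const card_ord.
by rewrite subrr mulr0 addr0.
Qed.

Lemma sort_ge_sum_le m k (g mu : 'I_m -> R) (D : 'I_m -> 'I_m -> R) : (k <= m)%N ->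
  (forall j p, 0 <= D j p) -> (forall j, \sum_p D j p = 1) -> (forall p, \sum_j D j p = 1) ->
  (forall j, g j <= \sum_p D j p * mu p) ->
  \sum_(i < k) nth 0 (sort geR [seq g j | j <- enum 'I_m]) i <=
  \sum_(i < k) nth 0 (sort geR [seq mu j | j <- enum 'I_m]) i.
Proof.
move=> km D_ge0 D_row D_col g_le.
have [->|k_gt0] := posnP k; first by rewrite !big_ord0.
have [s [gsE g_dec]] := sort_ge_perm g.
have [t [mutE mu_dec]] := sort_ge_perm mu.
rewrite !(big_ord_widen m _ km).
under eq_bigr do rewrite gsE.
under [X in _ <= X]eq_bigr do rewrite mutE.
pose c p := \sum_(i < m | (i < k)%N) D (s i) p.
have c01 p : 0 <= c p <= 1.
  rewrite sumr_ge0 //= -(D_col p) (reindex_perm s).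
  rewrite [X in _ <= X](bigID (fun i : 'I_m => (i < k)%N)) /=.
  by rewrite lerDl sumr_ge0.
have sum_c : \sum_p c p = k%:R.
  rewrite exchange_big /= (eq_bigr (fun _ => 1)) => [|i _]; last exact: D_row.
  by rewrite -(big_ord_widen m (fun _ => 1) km) sumr_const card_ord.
apply: (@le_trans _ _ (\sum_p c p * mu p)).
  rewrite /c; under [X in _ <= X]eq_bigr do rewrite mulr_suml.
  by rewrite exchange_big ler_sum.
rewrite (reindex_perm t); apply: nonincr_weighted_sum_le => //; first by rewrite k_gt0.
by rewrite -sum_c [RHS](reindex_perm t).
Qed.

End KyFan.

Lemma char_poly_conj (K : comNzRingType) m (P Q A : 'M[K]_m) :
  Q *m P = 1%:M -> char_poly (Q *m A *m P) = char_poly A.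
Proof.
move=> QP1; rewrite /char_poly /char_poly_mx.
set pP := map_mx polyC P; set pQ := map_mx polyC Q.
have pQP1 : pQ *m pP = 1%:M by rewrite -map_mxM QP1 map_mx1.
have -> : 'X%:M - map_mx polyC (Q *m A *m P) = pQ *m ('X%:M - map_mx polyC A) *m pP.
  by rewrite !map_mxM mulmxBr mulmxBl scalar_mxC -['X%:M *m pQ *m pP]mulmxA pQP1 mulmx1.
by rewrite !det_mulmx mulrC mulrA -det_mulmx (mulmx1C pQP1) det1 mul1r.
Qed.

Lemma comm_comb (K : comNzRingType) (A : algType K) (x x' y y' : A) (a b : K) :
  GRing.comm x x' -> GRing.comm y y' -> x * y' - y' * x = x' * y - y * x' ->
  GRing.comm (a *: x + b *: y) (a *: x' + b *: y').
Proof.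
move=> xx' yy' cross; rewrite /GRing.comm !mulrDl !mulrDr -!scalerAl -!scalerAr !scalerA.
rewrite xx' yy' [b * a]mulrC -!addrA; congr (_ + _); rewrite !addrA; congr (_ + _).
rewrite -!scalerDr; congr (_ *: _).
by rewrite -[x * y'](subrK (y' * x)) cross addrAC subrK.
Qed.

Section Spectral.
Variable R : realType.
Local Notation C := R[i].
Local Open Scope sesquilinear_scope.

HB.instance Definition _ := GRing.RMorphism.copy (@toC R) (real_complex R).

Lemma toC_inj : injective (@toC R). Proof. by move=> s t []. Qed.

Lemma conj_toC t : (toC t)^* = toC t :> C.
Proof. exact: conjc_real. Qed.

Definition normc2 (c : C) : R := complex.Re c ^+ 2 + complex.Im c ^+ 2.

Lemma normc2_ge0 c : 0 <= normc2 c.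
Proof. by rewrite addr_ge0 ?sqr_ge0. Qed.

Lemma normc2_conj c : normc2 c^* = normc2 c.
Proof. by case: c => a b; rewrite /normc2 /= sqrrN. Qed.

Lemma mulcJ_normc2 c : c * c^* = toC (normc2 c).
Proof. by case: c => a b; rewrite /normc2 /toC /=; congr Complex; ring. Qed.

Lemma conj_diag_mx_entry p m (Q : 'M[C]_(p, m)) (g : 'I_m -> R) k :
  (Q *m diag_mx (\row_j toC (g j)) *m Q^t*) k k = toC (\sum_j normc2 (Q k j) * g j).
Proof.
rewrite mul_mx_diag !mxE rmorph_sum; apply: eq_bigr => j _.
by rewrite !mxE rmorphM /= -mulcJ_normc2 mulrAC.
Qed.

Lemma unitary_normc2_row m (Q : 'M[C]_m) k : Q \is unitarymx -> \sum_j normc2 (Q k j) = 1.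
Proof.
move=> /unitarymxP QQ1; have := conj_diag_mx_entry Q (fun _ => 1) k.
have -> : \row_j toC 1 = const_mx 1 :> 'rV[C]_m by apply/matrixP => i j; rewrite !mxE rmorph1.
rewrite diag_const_mx mulmx1 QQ1 mxE eqxx mulr1n -(rmorph1 (@toC R)) => /toC_inj ->.
by apply: eq_bigr => j _; rewrite mulr1.
Qed.

Lemma unitary_normc2_col m (Q : 'M[C]_m) j : Q \is unitarymx -> \sum_k normc2 (Q k j) = 1.
Proof.
rewrite -trmxC_unitary => /(unitary_normc2_row j) <-.
by apply: eq_bigr => k _; rewrite !mxE normc2_conj.
Qed.

Definition udiag m (U : 'M[C]_m) (g : 'I_m -> R) : 'M[C]_m :=
  U^t* *m diag_mx (\row_k toC (g k)) *m U.

Lemma hermsymP m (A : 'M[C]_m) :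
  reflect (forall i j, A i j = (A j i)^*) (A \is hermsymmx).
Proof.
apply: (iffP (is_hermitianmxP _ _ _)); rewrite expr0 scale1r.
  by move=> {1}-> i j; rewrite !mxE.
by move=> AJ; apply/matrixP => i j; rewrite !mxE AJ.
Qed.

Lemma udiag_hermsym m (U : 'M[C]_m) g : udiag U g \is hermsymmx.
Proof.
have DJ : (diag_mx (\row_k toC (g k)))^t* = diag_mx (\row_k toC (g k)) :> 'M[C]_m.
  rewrite tr_diag_mx map_diag_mx (_ : map_mx _ _ = \row_k toC (g k)) //.
  by apply/rowP => k; rewrite !mxE /= conj_toC.
apply/is_hermitianmxP; rewrite expr0 scale1r /udiag !trmx_mul !map_mxM trmxCK.
by rewrite DJ mulmxA.
Qed.

Lemma hermsym_comb m (A B : 'M[C]_m) (s t : R) :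
  A \is hermsymmx -> B \is hermsymmx -> toC s *: A + toC t *: B \is hermsymmx.
Proof.
move=> /hermsymP AJ /hermsymP BJ; apply/hermsymP => i j.
by rewrite !mxE rmorphD !rmorphM /= !conj_toC -AJ -BJ.
Qed.

Lemma eigenvalue_udiag m (U : 'M[C]_m) g k : U \is unitarymx ->
  eigenvalue (udiag U g) (toC (g k)).
Proof.
move=> /unitarymxP UU1; apply/eigenvalueP; exists (delta_mx 0 k *m U).
  rewrite /udiag !mulmxA -(mulmxA _ U) UU1 mulmx1 -[_ *m diag_mx _]rowE.
  by rewrite row_diag_mx mxE scalemxAl.
apply/eqP => /(congr1 (fun v => v *m U^t*)); rewrite -mulmxA UU1 mulmx1 mul0mx.
by move/matrixP/(_ 0 k); rewrite !mxE !eqxx => /eqP; rewrite oner_eq0.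
Qed.

Lemma spec_in_udiag m (U : 'M[C]_m) g (I : interval R) : U \is unitarymx ->
  spec_in (udiag U g) I -> forall k, g k \in I.
Proof.
by move=> uU gI k; have [t tI /toC_inj ->] := gI _ (eigenvalue_udiag g k uU).
Qed.

Lemma eigs_dec_udiag m (U : 'M[C]_m) g : U \is unitarymx ->
  eigs_dec (udiag U g) = sort (fun a b => b <= a) [seq g j | j <- enum 'I_m].
Proof.
move=> uU; have char_udiag :
    char_poly (udiag U g) = \prod_(t <- [seq g j | j <- enum 'I_m]) ('X - (toC t)%:P).
  rewrite char_poly_conj ?(mulmx1C (unitarymxP _)) // char_poly_trig ?diag_mx_is_trig //.
  by rewrite big_map big_enum; apply: eq_bigr => j _; rewrite !mxE eqxx mulr1n.
have := epsilon_spec (inhabits [::])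
  (fun s : seq R => char_poly (udiag U g) = \prod_(t <- s) ('X - (toC t)%:P))
  (ex_intro _ _ char_udiag).
rewrite -/(eig_list _) char_udiag => eigE.
apply/(perm_sortP ge_total ge_trans ge_anti).
apply: (perm_map_inj toC_inj); apply: prod_XsubC_eq.
by rewrite !big_map -eigE big_map enumT.
Qed.

Lemma hermsym_trig_diag m (T : 'M[C]_m) : is_trig_mx T -> T \is hermsymmx ->
  T = diag_mx (\row_k toC (complex.Re (T k k))).
Proof.
move=> /is_trig_mxP T_trig /hermsymP TJ; apply/matrixP => a b; rewrite !mxE.
have [<-|neq_ab] := eqVneq a b.
  by move: (TJ a a); case: (T a a) => x y [] y0; rewrite mulr1n /toC; congr Complex; lra.
rewrite mulr0n; have [lt_ab|le_ba] := ltnP a b; first by rewrite T_trig.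
by rewrite TJ T_trig ?rmorph0 // ltn_neqAle le_ba andbT eq_sym.
Qed.

Lemma hermsym_codiagonalization n m (xs : 'I_n -> 'M[C]_m) :
  (forall i, xs i \is hermsymmx) -> abelian_tuple xs ->
  exists U (d : 'I_n -> 'I_m -> R), U \is unitarymx /\ forall i, xs i = udiag U (d i).
Proof.
move=> xsH xs_comm.
have xs_comm_seq : {in [seq xs i | i <- enum 'I_n] &, forall A B, comm_mx A B}.
  by move=> _ _ /mapP[i _ ->] /mapP[j _ ->]; exact: xs_comm.
have [P uP /allP P_trig] := cotrigonalization xs_comm_seq.
exists P, (fun i k => complex.Re ((P *m xs i *m P^t*) k k)); split => // i.
have xsPH : P *m xs i *m P^t* \is hermsymmx.
  apply/is_hermitianmxP; rewrite expr0 scale1r !trmx_mul !map_mxM trmxCK mulmxA.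
  by have /is_hermitianmxP := xsH i; rewrite expr0 scale1r => <-.
have xsP_trig : is_trig_mx (P *m xs i *m P^t*).
  have := P_trig _ (map_f xs (mem_enum _ i)).
  by rewrite /= /similar_to conjymx.
have /unitarymxP PP1 := uP; have PP1' := mulmx1C PP1.
rewrite /udiag -hermsym_trig_diag // !mulmxA PP1' mul1mx -mulmxA PP1'.
by rewrite mulmx1.
Qed.

Lemma jfc_udiag n m (f : ('I_n -> R) -> R) (xs : 'I_n -> 'M[C]_m) :
  (forall i, xs i \is hermsymmx) -> abelian_tuple xs ->
  exists U (d : 'I_n -> 'I_m -> R), [/\ U \is unitarymx,
    forall i, xs i = udiag U (d i) & jfc f xs = udiag U (fun k => f (fun i => d i k))].
Proof.
move=> xsH xs_comm; have [U [d [uU xsE]]] := hermsym_codiagonalization xsH xs_comm.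
have map_toC_row (g : 'I_m -> R) : map_mx (@toC R) (\row_k g k) = \row_k toC (g k).
  by apply/rowP => k; rewrite !mxE.
have : exists F, jfc_rel f xs F.
  exists (udiag U (fun k => f (fun i => (\row_k0 d i k0) 0 k))), U, (fun i => \row_k d i k).
  by split=> [|i|]; rewrite ?map_toC_row.
move=> /(epsilon_spec (inhabits 0)) [V [e [uV xsVE jfcE]]].
exists V, (fun i k => e i 0 k); split=> [|i|]; [exact: uV | | exact: jfcE].
have map_toC_e : map_mx (@toC R) (e i) = \row_k toC (e i 0 k).
  by apply/rowP => k; rewrite !mxE.
by rewrite /udiag xsVE map_toC_e; reflexivity.
Qed.

Lemma abelian_comb n m (xs ys : 'I_n -> 'M[C]_m) (a b : C) :
  abelian_tuple xs -> abelian_tuple ys -> compatible xs ys ->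
  abelian_tuple (fun i => a *: xs i + b *: ys i).
Proof.
case: m xs ys => [|m] xs ys xs_comm ys_comm xys_compat i j.
  by rewrite [LHS]flatmx0 [RHS]flatmx0.
exact: comm_comb (xs_comm i j) (ys_comm i j) (xys_compat i j).
Qed.

(* [qform W j A] is <A w, w> for w the conjugate of the j-th row of W. *)
Definition qform m (W : 'M[C]_m) (j : 'I_m) (A : 'M[C]_m) : R :=
  complex.Re ((W *m A *m W^t*) j j).

Lemma qform_comb m (W A B : 'M[C]_m) j (s t : R) :
  qform W j (toC s *: A + toC t *: B) = s * qform W j A + t * qform W j B.
Proof.
rewrite /qform mulmxDr mulmxDl -!scalemxAr -!scalemxAl.
move: (W *m A *m W^t*) (W *m B *m W^t*) => A' B'; rewrite !mxE.
by case: (A' j j) => ? ?; case: (B' j j) => ? ? /=; ring.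
Qed.

Lemma qform_udiag m (W U : 'M[C]_m) j g :
  qform W j (udiag U g) = \sum_p normc2 ((W *m U^t*) j p) * g p.
Proof.
rewrite /qform /udiag.
set D := diag_mx _.
have -> : W *m (U^t* *m D *m U) *m W^t* = (W *m U^t*) *m D *m (W *m U^t*)^t*.
  by rewrite trmx_mul map_mxM trmxCK !mulmxA.
by rewrite conj_diag_mx_entry.
Qed.

Lemma qform_udiag_self m (W : 'M[C]_m) j g : W \is unitarymx -> qform W j (udiag W g) = g j.
Proof.
move=> /unitarymxP WW1.
by rewrite /qform /udiag !mulmxA WW1 mul1mx -mulmxA WW1 mulmx1 !mxE eqxx mulr1n.
Qed.

Lemma qform_jensen n m (I : 'I_n -> interval R) (f : ('I_n -> R) -> R)
    (W U : 'M[C]_m) (a : 'I_n -> 'I_m -> R) j :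
  convex_on_box I f -> W \is unitarymx -> U \is unitarymx -> (forall i p, a i p \in I i) ->
  (forall i, qform W j (udiag U (a i)) \in I i) /\
  f (fun i => qform W j (udiag U (a i))) <= qform W j (udiag U (fun p => f (fun i => a i p))).
Proof.
move=> convex_f uW uU aI.
have uWU : W *m U^t* \is unitarymx by rewrite mul_unitarymx ?trmxC_unitary.
have [comb_I jensen] := convex_on_box_jensen convex_f (r := index_enum 'I_m)
  (fun p => normc2_ge0 ((W *m U^t*) j p)) (fun p i => aI i p) (unitary_normc2_row j uWU).
split=> [i|]; first by rewrite qform_udiag.
rewrite qform_udiag (_ : (fun i => _) = (fun i => \sum_p normc2 ((W *m U^t*) j p) * a i p)) //.
by apply: functional_extensionality => i; rewrite qform_udiag.
Qed.

Lemma weak_major_qform m (W M : 'M[C]_m) (g : 'I_m -> R) :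
  W \is unitarymx -> M \is hermsymmx -> (forall j, g j <= qform W j M) ->
  weak_major (udiag W g) M.
Proof.
move=> uW MH g_le k /andP[_ km].
have [Y [mu [uY /(_ ord0) ME]]] :=
  @hermsym_codiagonalization 1 m (fun _ => M) (fun _ => MH) (fun _ _ => erefl).
have uWY : W *m Y^t* \is unitarymx by rewrite mul_unitarymx ?trmxC_unitary.
rewrite ME !eigs_dec_udiag //.
apply: (sort_ge_sum_le (D := fun j p => normc2 ((W *m Y^t*) j p))) => // [j p|j|p|j].
- exact: normc2_ge0.
- exact: unitary_normc2_row.
- exact: unitary_normc2_col.
- by rewrite -qform_udiag -ME.
Qed.

End Spectral.

Theorem mainTheorem7 (R : realType) (n m : nat) (I : 'I_n -> interval R)
    (f : ('I_n -> R) -> R) (xs ys : 'I_n -> 'M[R[i]]_m) :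
  convex_on_box I f ->
  (forall i, selfadj (xs i)) -> (forall i, selfadj (ys i)) ->
  abelian_tuple xs -> abelian_tuple ys ->
  (forall i, spec_in (xs i) (I i)) -> (forall i, spec_in (ys i) (I i)) ->
  compatible xs ys ->
  forall l : R, 0 <= l <= 1 ->
    weak_major
      (jfc f (fun i => toC l *: xs i + toC (1 - l) *: ys i))
      (toC l *: jfc f xs + toC (1 - l) *: jfc f ys).
Proof.
move=> convex_f xsH ysH xs_comm ys_comm xsI ysI xys_compat l l01.
have [U [a [uU xsE ->]]] := jfc_udiag f xsH xs_comm.
have [V [b [uV ysE ->]]] := jfc_udiag f ysH ys_comm.
have zsH i : toC l *: xs i + toC (1 - l) *: ys i \is hermsymmx :=
  hermsym_comb l (1 - l) (xsH i) (ysH i).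
have [W [d [uW zsE ->]]] := jfc_udiag f zsH (abelian_comb _ _ xs_comm ys_comm xys_compat).
have aI i : forall p, a i p \in I i by apply: spec_in_udiag uU _; rewrite -xsE.
have bI i : forall p, b i p \in I i by apply: spec_in_udiag uV _; rewrite -ysE.
apply: weak_major_qform => // [|j]; first by apply: hermsym_comb; exact: udiag_hermsym.
have [xsI' fx_le] := qform_jensen j convex_f uW uU aI.
have [ysI' fy_le] := qform_jensen j convex_f uW uV bI.
have dE : (fun i => d i j) =
    (fun i => l * qform W j (udiag U (a i)) + (1 - l) * qform W j (udiag V (b i))).
  apply: functional_extensionality => i.
  by rewrite -(qform_udiag_self j (d i) uW) -zsE xsE ysE qform_comb.
rewrite dE qform_comb; apply: le_trans (convex_f _ _ xsI' ysI' _ l01) _.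
have /andP[l0 l1] := l01.
by rewrite lerD // ler_wpM2l // subr_ge0.
Qed.
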